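(* Let $K\ge1$, $\mathcal{X}$ a measurable space, $\mathcal{Z}=\mathcal{X}\times\{1,\ldots,K\}$, $\Theta$ a parameter set and $\ell:\Theta\times\mathcal{Z}\to\mathbb{R}_+$ measurable with $L=\sup_{(\theta,z)\in\Theta\times\mathcal{Z}}\ell(\theta,z)<\infty$. Let $Z'_i=(X'_i,S'_i)$, $i=1,\ldots,n$, be i.i.d. random elements of $\mathcal{Z}$ with $p'_k=\mathbb{P}(S'_1=k)$, and let $p_1,\ldots,p_K\ge0$ be given numbers with $\sum_k p_k=1$. Let $\varepsilon\in(0,1/2)$ and suppose $p'_k\in(\varepsilon,1-\varepsilon)$ for all $k$. Let $n'_k=\sum_{i=1}^n\mathbb{I}\{S'_i=k\}$ and define $$\widetilde{\mathcal{R}}_{w^*,n}(\theta)=\frac{1}{n}\sum_{i=1}^n\ell(\theta,Z'_i)\sum_{k=1}^K\mathbb{I}\{S'_i=k\}\frac{p_k}{p'_k},\qquad \widetilde{\mathcal{R}}_{\widehat{w}^*,n}(\theta)=\sum_{i=1}^n\ell(\theta,Z'_i)\sum_{k=1}^K\mathbb{I}\{S'_i=k\}\frac{p_k}{n'_k}.$$ Then for any $\delta\in(0,1)$, as soon as $n\ge 2\log(2K/\delta)/\varepsilon^2$, with probability larger than $1-\delta$, $$\sup_{\theta\in\Theta}\left|\widetilde{\mathcal{R}}_{\widehat{w}^*,n}(\theta)-\widetilde{\mathcal{R}}_{w^*,n}(\theta)\right|\le\frac{2L}{\varepsilon^2}\sqrt{\frac{\log(2K/\delta)}{2n}}.$$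
   Context: $\mathbb{I}\{\cdot\}$ denotes the indicator function. *)

From HB Require Import structures.
From mathcomp Require Import all_boot all_order all_algebra.
From mathcomp Require Import all_classical all_reals all_analysis.
Set Implicit Arguments. Unset Strict Implicit. Unset Printing Implicit Defensive.
Import Order.TTheory GRing.Theory Num.Theory.
Local Open Scope classical_set_scope.
Local Open Scope ring_scope.

(* The label set {1,...,K} (K >= 1) is encoded as
   'I_Km1.+1 with K = Km1.+1, equipped with the discrete sigma-algebra
   (all subsets measurable).  (MathComp-Analysis measurable types must be
   pointed, hence the .+1 form, which also encodes K >= 1.) *)
HB.instance Definition _ (K : nat) := isPointed.Build 'I_K.+1 ord0.
HB.instance Definition _ (K : nat) := @isMeasurable.Build default_measure_display
  'I_K.+1 discrete_measurable discrete_measurable0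
  discrete_measurableC discrete_measurableU.

(* Mutual independence of a finite family of random elements Z_i, i < n:
   the product rule for every choice of measurable sets (choosing A i = setT
   recovers the product rule for every subfamily). *)
Definition mutually_independent {R : realType} {d0 : measure_display}
  {T : measurableType d0} (P : probability T R) {dZ : measure_display}
  {Z : measurableType dZ} (n : nat) (Zs : 'I_n -> T -> Z) : Prop :=
  (forall i, measurable_fun setT (Zs i)) /\
  forall A : 'I_n -> set Z, (forall i, measurable (A i)) ->
    P (\bigcap_(i in [set: 'I_n]) (Zs i @^-1` A i)) =
    (\prod_(i < n) P (Zs i @^-1` A i))%E.

Definition identically_distributed {R : realType} {d0 : measure_display}
  {T : measurableType d0} (P : probability T R) {dZ : measure_display}
  {Z : measurableType dZ} (n : nat) (Zs : 'I_n -> T -> Z) : Prop :=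
  forall i j (A : set Z), measurable A -> P (Zs i @^-1` A) = P (Zs j @^-1` A).

Definition iid {R : realType} {d0 : measure_display}
  {T : measurableType d0} (P : probability T R) {dZ : measure_display}
  {Z : measurableType dZ} (n : nat) (Zs : 'I_n -> T -> Z) : Prop :=
  mutually_independent P Zs /\ identically_distributed P Zs.

Definition count_label {X : Type} {K n : nat} (Zs : 'I_n -> X * 'I_K) (k : 'I_K) : nat :=
  \sum_(i < n) ((Zs i).2 == k : nat).

Definition R_wstar {R : realType} {Theta X : Type} {K n : nat}
  (l : Theta -> X * 'I_K -> R) (p p' : 'I_K -> R) (Zs : 'I_n -> X * 'I_K)
  (theta : Theta) : R :=
  n%:R^-1 * \sum_(i < n) l theta (Zs i) *
    \sum_(k < K) (((Zs i).2 == k)%:R * (p k / p' k)).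

(* \tilde R_{\hat w^*,n}(theta)  (x / 0 = 0 by MathComp convention) *)
Definition R_what {R : realType} {Theta X : Type} {K n : nat}
  (l : Theta -> X * 'I_K -> R) (p : 'I_K -> R) (Zs : 'I_n -> X * 'I_K)
  (theta : Theta) : R :=
  \sum_(i < n) l theta (Zs i) *
    \sum_(k < K) (((Zs i).2 == k)%:R * (p k / (count_label Zs k)%:R)).

From HB Require Import structures.
From mathcomp Require Import all_boot all_order all_algebra.
From mathcomp Require Import all_classical all_reals all_analysis.
From mathcomp Require Import ring lra.
Set Implicit Arguments. Unset Strict Implicit. Unset Printing Implicit Defensive.
Import Order.TTheory GRing.Theory Num.Theory.
Local Open Scope classical_set_scope.
Local Open Scope ring_scope.

(* Writing n'_k for the number of sample points with label k and W_k <= L n'_k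
   for the loss they carry, the two empirical risks differ by
   sum_k p_k W_k (1/n'_k - 1/(n p'_k)); hence they are within L s / eps of each
   other as soon as |n'_k - n p'_k| <= n s for every label k.  Each n'_k is a
   binomial count, and a Chernoff bound (computed by splitting the sample space
   into the 2^n events recording which Z_i carry label k) bounds the probability
   of a deviation n s by 2 exp(-n s^2 / 8).  A union bound over the K labels with
   s = (2 / eps) sqrt(log(2K/delta) / (2n)) leaves a failure probability below
   delta; this is where eps < 1/2 is used. *)

Section bernoulli_mgf.
Variable R : realType.

Lemma expR_le_quadratic (x : R) : 0 <= x <= 2^-1 -> expR x <= 1 + x + 2 * x ^+ 2.
Proof.
move=> /andP[x0 x1].
have := expR_ge1Dx (- x); have := expR_gt0 x.
have : expR x * expR (- x) = 1 by rewrite -expRD subrr expR0.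
nra.
Qed.

Lemma bernoulli_mgf_le (q x : R) : 0 <= q <= 1 -> 0 <= x <= 2^-1 ->
  q * expR x + (1 - q) <= expR (q * x + 2 * x ^+ 2).
Proof.
move=> /andP[q0 q1] x01; have := expR_le_quadratic x01.
have := expR_ge1Dx (q * x + 2 * x ^+ 2); case/andP: x01; nra.
Qed.

Definition pattern_weight n (q : R) (f : {ffun 'I_n -> bool}) : R :=
  \prod_(i < n) (if f i then q else 1 - q).

Lemma pattern_weight_ge0 n (q : R) (f : {ffun 'I_n -> bool}) :
  0 <= q <= 1 -> 0 <= pattern_weight q f.
Proof.
by move=> /andP[q0 q1]; apply: prodr_ge0 => i _; case: (f i); rewrite ?subr_ge0.
Qed.

Lemma sum_pattern_weight_expR n (q x : R) :
  \sum_(f : {ffun 'I_n -> bool})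
     pattern_weight q f * expR (x * (\sum_(i < n) (f i : nat))%:R) =
  (q * expR x + (1 - q)) ^+ n.
Proof.
transitivity (\prod_(i < n) \sum_(b : bool) (if b then q * expR x else 1 - q));
  last by rewrite (eq_bigr _ (fun i _ => big_bool _ _)) prodr_const card_ord.
rewrite bigA_distr_bigA; apply: eq_bigr => f _.
rewrite natr_sum mulr_sumr expR_sum -big_split /=; apply: eq_bigr => i _.
by case: (f i); rewrite ?mulr1 ?mulr0 ?expR0 ?mulr1.
Qed.

End bernoulli_mgf.

Lemma measurable_preimageT {d d' : measure_display} {aT : measurableType d}
    {rT : measurableType d'} (f : aT -> rT) (B : set rT) :
  measurable_fun setT f -> measurable B -> measurable (f @^-1` B).
Proof. by move=> mf mB; rewrite -[X in measurable X]setTI; apply: mf. Qed.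

Section count_in.
Context {R : realType} {d0 : measure_display} {T : measurableType d0}
  (P : probability T R) {dY : measure_display} {Y : measurableType dY}.

Lemma measure_bigsetU_le (I : Type) (r : seq I) (Pr : pred I) (F : I -> set T) :
  (forall i, measurable (F i)) ->
  (P (\big[setU/set0]_(i <- r | Pr i) F i) <= \sum_(i <- r | Pr i) P (F i))%E.
Proof.
move=> mF; elim: r => [|x r IH]; first by rewrite !big_nil measure0.
rewrite !big_cons; case: ifP => // _.
apply: le_trans (measureU2 _ _ _) _ => //; first exact: bigsetU_measurable.
exact: leeD.
Qed.

Lemma probability_setC_gt (A : set T) (b delta : R) : measurable A ->
  (P A <= b%:E)%E -> b < delta -> ((1 - delta)%:E < P (~` A))%E.
Proof.
move=> mA PAb bdelta; rewrite probability_setC //.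
have : (0 <= P A)%E by [].
by case: (P A) PAb => [a| |] //; rewrite !lee_fin -EFinB lte_fin; lra.
Qed.

Lemma probability_preimage_setC (f : T -> Y) (C : set Y) (q : R) :
  measurable_fun setT f -> measurable C -> P (f @^-1` C) = q%:E ->
  P (f @^-1` ~` C) = (1 - q)%:E.
Proof.
move=> mf mC PC; rewrite -preimage_setC probability_setC ?PC ?EFinB //.
exact: measurable_preimageT.
Qed.

Definition count_in n (Z : 'I_n -> T -> Y) (C : set Y) (w : T) : nat :=
  \sum_(i < n) (Z i w \in C : nat).

Lemma count_inC n (Z : 'I_n -> T -> Y) C w :
  (count_in Z C w + count_in Z (~` C) w)%N = n.
Proof.
rewrite -big_split /= -[n in RHS]card_ord -sum1_card.
by apply: eq_bigr => i _; rewrite in_setC; case: (_ \in C).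
Qed.

Lemma count_in_deviation_eq n (Z : 'I_n -> T -> Y) C (q a : R) :
  [set w | a <= `|(count_in Z C w)%:R - n%:R * q|] =
  [set w | n%:R * q + a <= (count_in Z C w)%:R] `|`
  [set w | n%:R * (1 - q) + a <= (count_in Z (~` C) w)%:R].
Proof.
apply/seteqP; split=> w /=;
  have /(congr1 (fun k => k%:R : R)) := count_inC Z C w; rewrite natrD => nE.
  by rewrite ler_normr => /orP[h|h]; [left|right]; lra.
by case=> h; rewrite ler_normr; apply/orP; [left|right]; lra.
Qed.

Definition pattern_event n (Z : 'I_n -> T -> Y) (C : set Y)
    (f : {ffun 'I_n -> bool}) : set T :=
  \bigcap_(i in [set: 'I_n]) (Z i @^-1` (if f i then C else ~` C)).

Lemma count_in_ge_patterns n (Z : 'I_n -> T -> Y) C (m : R) :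
  [set w | m <= (count_in Z C w)%:R] =
  \big[setU/set0]_(f : {ffun 'I_n -> bool} | m <= (\sum_(i < n) (f i : nat))%:R)
    pattern_event Z C f.
Proof.
rewrite -bigcup_seq_cond; apply/seteqP; split => w /=.
  move=> mw; exists [ffun i => Z i w \in C].
    apply/andP; split; first by rewrite mem_index_enum.
    by rewrite (eq_bigr (fun i => (Z i w \in C) : nat)) // => i _; rewrite ffunE.
  move=> i _ /=; rewrite ffunE; case: ifP => [/set_mem //|/negbT/negP CN].
  by move=> HC; apply: CN; apply/mem_set.
move=> [f /andP[_ mf] wf]; rewrite /count_in (eq_bigr (fun i => f i : nat)) //.
move=> i _; have := wf i I; rewrite /=; case: (f i) => [/mem_set -> //|].
by move=> /= CN; rewrite memNset.
Qed.

Section measurability.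
Variables (n : nat) (Z : 'I_n -> T -> Y) (C : set Y).
Hypotheses (mZ : forall i, measurable_fun setT (Z i)) (mC : measurable C).

Lemma measurable_pattern_event f : measurable (pattern_event Z C f).
Proof.
apply: fin_bigcap_measurable => // i _; apply: measurable_preimageT => //.
by case: (f i) => //; apply: measurableC.
Qed.

Lemma measurable_count_in_ge (m : R) :
  measurable [set w | m <= (count_in Z C w)%:R].
Proof.
rewrite count_in_ge_patterns; apply: bigsetU_measurable => f _.
exact: measurable_pattern_event.
Qed.

End measurability.

Lemma measurable_count_in_deviation n (Z : 'I_n -> T -> Y) C (q a : R) :
  (forall i, measurable_fun setT (Z i)) -> measurable C ->
  measurable [set w | a <= `|(count_in Z C w)%:R - n%:R * q|].
Proof.
move=> mZ mC; rewrite count_in_deviation_eq.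
by apply: measurableU; apply: measurable_count_in_ge => //; apply: measurableC.
Qed.

Section upper_tail.
Variables (n : nat) (Z : 'I_n -> T -> Y) (C : set Y) (q : R).
Hypotheses (Zindep : mutually_independent P Z) (mC : measurable C)
  (PZC : forall i, P (Z i @^-1` C) = q%:E).

Lemma probability_pattern_event f :
  P (pattern_event Z C f) = (pattern_weight q f)%:E.
Proof.
rewrite /pattern_event Zindep.2; last first.
  by move=> i; case: (f i) => //; apply: measurableC.
rewrite -prodEFin; apply: eq_bigr => i _; case: (f i) => //.
exact: probability_preimage_setC (Zindep.1 i) mC (PZC i).
Qed.

Hypothesis q01 : 0 <= q <= 1.

(* Chernoff: on the event [m <= #f] we have [1 <= expR (x * (#f - m))], and
   summing the latter over all patterns f gives the moment generating function. *)
Lemma chernoff_count_in (x a : R) : 0 <= x <= 2^-1 ->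
  (P [set w | (n%:R * q + a <= (count_in Z C w)%:R)%R] <=
     (expR (2 * n%:R * x ^+ 2 - x * a))%:E)%E.
Proof.
move=> x01; set m := n%:R * q + a; have x0 : 0 <= x by case/andP: x01.
rewrite count_in_ge_patterns.
apply: (le_trans (measure_bigsetU_le _ _ (measurable_pattern_event Zindep.1 mC))).
rewrite (eq_bigr _ (fun f _ => probability_pattern_event f)) sumEFin lee_fin.
apply: (@le_trans _ _ (expR (- (x * m)) * \sum_(f : {ffun 'I_n -> bool})
    pattern_weight q f * expR (x * (\sum_(i < n) (f i : nat))%:R))).
  rewrite mulr_sumr big_mkcond /=; apply: ler_sum => f _.
  rewrite mulrCA -expRD; case: ifP => mf.
    rewrite ler_peMr ?pattern_weight_ge0 //; apply: (le_trans _ (expR_ge1Dx _)).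
    by rewrite lerDl addrC -mulrBr mulr_ge0 // subr_ge0.
  by rewrite mulr_ge0 ?pattern_weight_ge0 ?expR_ge0.
rewrite sum_pattern_weight_expR.
apply: (@le_trans _ _ (expR (- (x * m)) * expR (q * x + 2 * x ^+ 2) ^+ n)).
  rewrite ler_wpM2l ?expR_ge0 // lerXn2r ?nnegrE ?expR_ge0 //.
    by have := bernoulli_mgf_le q01 x01; have := expR_gt0 x; case/andP: q01; nra.
  exact: bernoulli_mgf_le.
by rewrite -expRM_natl -expRD ler_expR /m; lra.
Qed.

Lemma count_in_upper_tail (s : R) : 0 <= s <= 2 ->
  (P [set w | (n%:R * q + n%:R * s <= (count_in Z C w)%:R)%R] <=
     (expR (- (n%:R * s ^+ 2 / 8)))%:E)%E.
Proof.
move=> s02.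
have -> : - (n%:R * s ^+ 2 / 8) = 2 * n%:R * (s / 4) ^+ 2 - s / 4 * (n%:R * s).
  by field.
by apply: chernoff_count_in; case/andP: s02 => s0 s2; apply/andP; split; lra.
Qed.

End upper_tail.

Lemma count_in_deviation_le n (Z : 'I_n -> T -> Y) C (q s : R) :
  mutually_independent P Z -> measurable C ->
  (forall i, P (Z i @^-1` C) = q%:E) -> 0 <= q <= 1 -> 0 <= s <= 2 ->
  (P [set w | (n%:R * s <= `|(count_in Z C w)%:R - n%:R * q|)%R] <=
     (2 * expR (- (n%:R * s ^+ 2 / 8)))%:E)%E.
Proof.
move=> Zindep mC PZC q01 s02; rewrite count_in_deviation_eq.
apply: (le_trans (measureU2 _ _ _)).
- exact: measurable_count_in_ge Zindep.1 mC _.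
- exact: measurable_count_in_ge Zindep.1 (measurableC mC) _.
rewrite (mulr_natl (expR _) 2) mulr2n EFinD.
apply: leeD; apply: count_in_upper_tail => //; first exact: measurableC.
  by move=> i; exact: probability_preimage_setC (Zindep.1 i) mC (PZC i).
by case/andP: q01 => q0 q1; apply/andP; split; lra.
Qed.

End count_in.

Lemma reweighting_error_le (R : realFieldType) (L W c a r : R) :
  0 <= L -> 0 <= W -> W <= L * c -> 0 <= c -> 0 < a -> `|c - a| <= r ->
  `|W * (c^-1 - a^-1)| <= L * r / a.
Proof.
move=> L0 W0 WL c0 a0 car.
have r0 : 0 <= r := le_trans (normr_ge0 _) car.
have [c_eq0|c_neq0] := eqVneq c 0.
  have -> : W = 0 by apply: le_anti; rewrite W0 andbT -(mulr0 L) -c_eq0.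
  by rewrite mul0r normr0 divr_ge0 ?mulr_ge0 // ltW.
have c_gt0 : 0 < c by rewrite lt0r c_neq0.
have -> : W * (c^-1 - a^-1) = W / c * ((a - c) / a).
  by field; rewrite c_neq0 gt_eqF.
rewrite normrM -[leRHS]mulrA ler_pM ?normr_ge0 //.
  by rewrite ger0_norm ?divr_ge0 // ler_pdivrMr.
by rewrite normrM normfV (gtr0_norm a0) distrC ler_wpM2r // invr_ge0 ltW.
Qed.

Definition label_loss {R : realType} {Theta X : Type} {K n : nat}
    (l : Theta -> X * 'I_K -> R) (Zs : 'I_n -> X * 'I_K) (th : Theta)
    (k : 'I_K) : R :=
  \sum_(i < n) l th (Zs i) * ((Zs i).2 == k)%:R.

Section reweighting.
Variables (R : realType) (Theta X : Type) (K n : nat).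
Variables (l : Theta -> X * 'I_K -> R) (p p' : 'I_K -> R) (Zs : 'I_n -> X * 'I_K).

Lemma R_what_subr_R_wstar th :
  R_what l p Zs th - R_wstar l p p' Zs th =
  \sum_(k < K) label_loss l Zs th k * p k *
    ((count_label Zs k)%:R^-1 - (n%:R * p' k)^-1).
Proof.
rewrite /R_what /R_wstar /label_loss mulr_sumr -sumrB.
under [RHS]eq_bigr do rewrite !mulr_suml.
rewrite [RHS]exchange_big; apply: eq_bigr => i _ /=.
rewrite !mulr_sumr -sumrB; apply: eq_bigr => k _; rewrite invfM; ring.
Qed.

Lemma label_loss_le L th k : (forall z, l th z <= L) ->
  label_loss l Zs th k <= L * (count_label Zs k)%:R.
Proof.
move=> lL; rewrite /count_label natr_sum mulr_sumr; apply: ler_sum => i _.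
by rewrite ler_wpM2r ?ler0n.
Qed.

Lemma dist_R_what_R_wstar_le L eps s th :
  (forall th z, 0 <= l th z) -> (forall th z, l th z <= L) ->
  (forall k, 0 <= p k) -> \sum_(k < K) p k = 1 ->
  0 < eps -> (forall k, eps < p' k) -> (0 < n)%N ->
  (forall k, `|(count_label Zs k)%:R - n%:R * p' k| <= n%:R * s) ->
  `|R_what l p Zs th - R_wstar l p p' Zs th| <= L * s / eps.
Proof.
move=> l0 lL p0 p1 eps0 p'eps n0 count_dev.
have n_gt0 : 0 < n%:R :> R by rewrite ltr0n.
have L0 : 0 <= L := le_trans (l0 th (Zs (Ordinal n0))) (lL _ _).
rewrite R_what_subr_R_wstar; apply: le_trans (ler_norm_sum _ _ _) _.
apply: (@le_trans _ _ (\sum_(k < K) p k * (L * s / eps))); last first.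
  by rewrite -mulr_suml p1 mul1r.
apply: ler_sum => k _.
have p'k_gt0 : 0 < p' k := lt_trans eps0 (p'eps k).
have s0 : 0 <= s by rewrite -(pmulr_rge0 _ n_gt0); apply: le_trans (count_dev k).
rewrite -mulrA mulrCA normrM (ger0_norm (p0 k)) ler_wpM2l //.
apply: le_trans (reweighting_error_le L0 _ (label_loss_le k (lL th)) _ _ (count_dev k)) _.
- by apply: sumr_ge0 => i _; rewrite mulr_ge0.
- exact: ler0n.
- exact: mulr_gt0.
have -> : L * (n%:R * s) / (n%:R * p' k) = L * s / p' k by field; rewrite !gt_eqF.
by rewrite ler_wpM2l ?mulr_ge0 // lef_pV2 ?posrE ?ltW.
Qed.

End reweighting.

Lemma sample_size_deviation (R : realType) (K n : nat) (eps delta s : R) :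
  (0 < K)%N -> 0 < eps -> eps < 2^-1 -> 0 < delta -> delta < 1 ->
  2 * ln (2 * K%:R / delta) / eps ^+ 2 <= n%:R ->
  s = 2 / eps * Num.sqrt (ln (2 * K%:R / delta) / (2 * n%:R)) ->
  [/\ (0 < n)%N, 0 <= s <= 2 &
      K%:R * (2 * expR (- (n%:R * s ^+ 2 / 8))) < delta].
Proof.
move=> K_gt0 eps0 eps1 delta0 delta1 n_ge sE.
set lK := ln _ in n_ge sE.
have K_ge1 : 1 <= K%:R :> R by rewrite ler1n.
have ratio_gt0 : 0 < 2 * K%:R / delta by rewrite divr_gt0 //; lra.
have lK_gt0 : 0 < lK by rewrite ln_gt0 // ltr_pdivlMr // mul1r; lra.
have eps2_gt0 : 0 < eps ^+ 2 := exprn_gt0 2 eps0.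
have n_gt0 : 0 < n%:R :> R.
  by apply: lt_le_trans n_ge; rewrite divr_gt0 // mulr_gt0.
have s0 : 0 <= s by rewrite sE mulr_ge0 ?sqrtr_ge0 // divr_ge0 // ltW.
have ns2 : n%:R * s ^+ 2 = 2 * lK / eps ^+ 2.
  rewrite sE exprMn sqr_sqrtr ?divr_ge0 ?mulr_ge0 ?ler0n ?ltW //.
  by field; rewrite !gt_eqF.
have s2_le1 : s ^+ 2 <= 1 by rewrite -(ler_pM2l n_gt0) mulr1 ns2.
split; [by rewrite -(ltr0n R) | apply/andP; split; nra |].
have -> : delta = K%:R * (2 * expR (- lK)).
  by rewrite expRN lnK ?posrE // invf_div; field; rewrite gt_eqF // (lt_le_trans ltr01).
rewrite ltr_pM2l ?(lt_le_trans ltr01) // ltr_pM2l // ltr_expR ltrN2 ns2.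
rewrite ltr_pdivlMr; last lra.
rewrite ltr_pdivlMr // expr2.
have : eps * eps < 4^-1 by nra.
nra.
Qed.

Lemma count_in_label {d0 : measure_display} {T : measurableType d0}
    {dX : measure_display} {X : measurableType dX} {K n : nat}
    (Z : 'I_n -> T -> X * 'I_K.+1) (k : 'I_K.+1) (w : T) :
  count_in Z ([set: X] `*` [set k]) w = count_label (fun i => Z i w) k.
Proof.
apply: eq_bigr => i _; congr nat_of_bool.
by apply/idP/eqP => [/set_mem [_ ->] //|kE]; apply/mem_set.
Qed.

Theorem lemma3 (R : realType) (d0 : measure_display) (T : measurableType d0)
  (P : probability T R)
  (dX : measure_display) (X : measurableType dX)
  (dTh : measure_display) (Theta : measurableType dTh)
  (Km1 : nat) (l : Theta -> X * 'I_Km1.+1 -> R) (L : R)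
  (n : nat) (Z : 'I_n -> T -> X * 'I_Km1.+1)
  (p p' : 'I_Km1.+1 -> R) (eps delta : R) :
  measurable_fun setT (fun q : Theta * (X * 'I_Km1.+1) => l q.1 q.2) ->
  (forall th z, 0 <= l th z) ->
  (forall th z, l th z <= L) ->
  iid P Z ->
  (forall i k, P [set w | (Z i w).2 = k] = (p' k)%:E) ->
  (forall k, 0 <= p k) -> \sum_(k < Km1.+1) p k = 1 ->
  0 < eps -> eps < 2^-1 ->
  (forall k, eps < p' k < 1 - eps) ->
  0 < delta -> delta < 1 ->
  2 * ln (2 * (Km1.+1)%:R / delta) / eps ^+ 2 <= n%:R ->
  exists E : set T, measurable E /\ ((1 - delta)%:E < P E)%E /\
    forall w, E w -> forall th : Theta,
      `| R_what l p (fun i => Z i w) th - R_wstar l p p' (fun i => Z i w) th |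
        <= 2 * L / eps ^+ 2 * Num.sqrt (ln (2 * (Km1.+1)%:R / delta) / (2 * n%:R)).
Proof.
move=> _ l0 lL [Zindep _] PZ p0 p1 eps0 eps1 p'eps delta0 delta1 n_ge.
set s := 2 / eps * Num.sqrt (ln (2 * (Km1.+1)%:R / delta) / (2 * n%:R)).
have [n_gt0 s02 tail_lt] :=
  sample_size_deviation (ltn0Sn Km1) eps0 eps1 delta0 delta1 n_ge (erefl s).
pose C k : set (X * 'I_Km1.+1) := [set: X] `*` [set k].
have mC k : measurable (C k) by apply: measurableX.
have PZC k i : P (Z i @^-1` C k) = (p' k)%:E.
  by rewrite -(PZ i k); congr (P _); apply/seteqP; split=> w /= => [[]|].
pose dev k := [set w | (n%:R * s <= `|(count_in Z (C k) w)%:R - n%:R * p' k|)%R].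
have mdev k : measurable (dev k).
  exact: measurable_count_in_deviation Zindep.1 (mC k).
have p'01 k : 0 <= p' k <= 1 by case/andP: (p'eps k) => ? ?; apply/andP; split; lra.
pose bad := \big[setU/set0]_(k < Km1.+1) dev k.
exists (~` bad); split; [|split].
- by apply/measurableC/bigsetU_measurable => k _.
- apply: probability_setC_gt tail_lt; first exact: bigsetU_measurable.
  apply: le_trans (measure_bigsetU_le P _ _ mdev) _.
  rewrite -[Km1.+1 in leRHS]card_ord mulr_natl -sumr_const -sumEFin.
  by apply: lee_sum => k _; apply: count_in_deviation_le.
move=> w /= good th.
apply: le_trans (dist_R_what_R_wstar_le (s := s) th l0 lL p0 p1 eps0 _ n_gt0 _) _.
- by move=> k; case/andP: (p'eps k).
- move=> k; rewrite -count_in_label; apply/ltW; rewrite ltNge; apply/negP => devk.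
  by apply: good; rewrite /bad (bigD1 k) //=; left.
rewrite /s le_eqVlt; apply/orP; left; apply/eqP.
by field; rewrite gt_eqF.
Qed.
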